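(* Asymptotically almost surely (as $n\to\infty$), $T\sim\mathcal{R}(n,2)$ has the property that every minimal feedback arc set of $T$ contains a matching of size $n-1$.
   Context: $\mathcal{R}(n,2)$ denotes the probability space of bipartite tournaments with vertex classes $A_1,A_2$, each of size $n$, where every edge between $A_1$ and $A_2$ is oriented independently and uniformly at random. A feedback arc set of a directed graph $T$ is a set of edges (viewed as a spanning subgraph) meeting every directed cycle; it is minimal if no proper subset of it is a feedback arc set. *)

From HB Require Import structures.
From mathcomp Require Import all_boot all_order all_algebra.
From mathcomp Require Import all_classical all_reals all_analysis.
Set Implicit Arguments. Unset Strict Implicit. Unset Printing Implicit Defensive.
Import Order.TTheory GRing.Theory Num.Theory.

(* Bipartite tournament with classes A1 = 'I_n (left, inl) and A2 = 'I_n
   (right, inr).  The edge set is 'I_n * 'I_n: the pair (i, j) is the edge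
   between i in A1 and j in A2.  An orientation o : {ffun 'I_n*'I_n -> bool}
   orients (i,j) from i to j when o (i,j) = true, and from j to i otherwise. *)
Definition vert n := ('I_n + 'I_n)%type.
Definition orient n := {ffun 'I_n * 'I_n -> bool}.

Definition arc n (o : orient n) : rel (vert n) := fun x y =>
  match x, y with
  | inl i, inr j => o (i, j)
  | inr j, inl i => ~~ o (i, j)
  | _, _ => false
  end.

Definition und n (x y : vert n) : option ('I_n * 'I_n) :=
  match x, y with
  | inl i, inr j => Some (i, j)
  | inr j, inl i => Some (i, j)
  | _, _ => None
  end.

Definition directed_cycle n (o : orient n) (s : seq (vert n)) : bool :=
  [&& s != [::], uniq s & cycle (arc o) s].

Definition meets n (F : {set 'I_n * 'I_n}) (s : seq (vert n)) : bool :=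
  has (fun x => if und x (next s x) is Some e then e \in F else false) s.

Definition feedback_arc_set n (o : orient n) (F : {set 'I_n * 'I_n}) : Prop :=
  forall s, directed_cycle o s -> meets F s.

Definition minimal_fas n (o : orient n) (F : {set 'I_n * 'I_n}) : Prop :=
  feedback_arc_set o F /\
  forall G : {set 'I_n * 'I_n}, G \proper F -> ~ feedback_arc_set o G.

Definition matching n (M : {set 'I_n * 'I_n}) : Prop :=
  forall e1 e2, e1 \in M -> e2 \in M -> e1 != e2 ->
    e1.1 != e2.1 /\ e1.2 != e2.2.

Definition good n (o : orient n) : Prop :=
  forall F, minimal_fas o F ->
    exists M : {set 'I_n * 'I_n},
      [/\ M \subset F, matching M & #|M| = n.-1].

(* probability in R(n,2): orientations are uniform on {ffun 'I_n*'I_n -> bool},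
   i.e. each edge is oriented independently and uniformly *)
Definition prob_R (R : realType) n (P : orient n -> Prop) : R :=
  (#|[set o : orient n | `[< P o >]]|%:R / (2 ^ (n * n))%:R)%R.

(* If a feedback arc set F of T contains no matching of size n - 1, the
   deficiency version of Hall's theorem yields a set X of vertices of A1 whose
   F-neighbourhood N satisfies |N| + 2 <= |X|.  With Y the complement of N in A2
   we get |X| + |Y| >= n + 2, and no edge between X and Y lies in F.  As T minus F
   is acyclic, ranking the vertices by their number of ancestors in T minus F
   shows that T orients X * Y along a linear order.  Such an orientation is
   determined by the ranks of the vertices of Y among themselves and the
   positions of those of X relative to Y: for |X| = a >= b = |Y| at most
   b^b (b+1)^a of the 2^(ab) orientations of X * Y arise.  A union bound over all
   pairs (X, Y) bounds the probability of failure by 8/(n+1) for large n. *)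

From HB Require Import structures.
From mathcomp Require Import all_classical all_reals all_analysis.
(* Imported again so that finset's [setX], [subsetP], ... shadow the
   homonymous notions on classical sets. *)
From mathcomp Require Import all_boot all_order all_algebra zify.
Set Implicit Arguments. Unset Strict Implicit. Unset Printing Implicit Defensive.

(** * Counting and binomial estimates *)

Lemma setUD_sub (T : finType) (X Y : {set T}) : X \subset Y -> X :|: Y :\: X = Y.
Proof. by move=> XY; rewrite -{2}(setID Y X) (setIidPr XY). Qed.

Lemma disjoint_setD (T : finType) (X Y : {set T}) : [disjoint X & Y :\: X].
Proof. by rewrite -setI_eq0 setIDA setDIl setDv set0I. Qed.

Lemma subset_of_card (T : finType) (A : {set T}) k :
  k <= #|A| -> exists2 B : {set T}, B \subset A & #|B| = k.
Proof.
elim: k => [|k IH] leA; first by exists set0; rewrite ?sub0set ?cards0.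
have [B BA cardB] := IH (ltnW leA).
have /properP[_ [x xA xB]] : B \proper A by rewrite properEcard BA cardB.
by exists (x |: B); rewrite ?subUset ?sub1set ?xA ?BA // cardsU1 xB cardB.
Qed.

Lemma leq_card_bigcup (I T : finType) (P : pred I) (F : I -> {set T}) :
  #|\bigcup_(i | P i) F i| <= \sum_(i | P i) #|F i|.
Proof.
elim/big_ind2: _ => [|m A k B Am Bk|//]; first by rewrite cards0.
exact: leq_trans (leq_card_setU A B).1 (leq_add Am Bk).
Qed.

Lemma leq_sum_const (I : finType) (P : pred I) (t : I -> nat) m :
  (forall i, P i -> t i <= m) -> \sum_(i | P i) t i <= #|P| * m.
Proof. by move=> tm; rewrite -sum_nat_const; apply: leq_sum. Qed.

Lemma leq_card_bigcup_const (I T : finType) (P : pred I) (F : I -> {set T}) c m :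
  (forall i, P i -> #|F i| * c <= m) -> #|\bigcup_(i | P i) F i| * c <= #|P| * m.
Proof.
move=> Fm; apply: leq_trans (leq_mul (leq_card_bigcup P F) (leqnn c)) _.
by rewrite big_distrl; apply: leq_sum_const.
Qed.

Lemma card_ffun_agree (D : finType) (S : {set D}) (g : D -> bool) :
  #|[set f : {ffun D -> bool} | [forall e in S, f e == g e]]| * 2 ^ #|S| = 2 ^ #|D|.
Proof.
have agreeE : [set f : {ffun D -> bool} | [forall e in S, f e == g e]] =i
    family (fun e => if e \in S then pred1 (g e) else predT).
  move=> f; rewrite inE; apply/forallP/familyP => fg e; have := fg e.
    by case: (e \in S) => //= /eqP->; rewrite inE.
  by case: (e \in S) => //=; rewrite inE.
rewrite (eq_card agreeE) card_family foldrE big_map big_enum.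
rewrite (eq_bigr (fun e => if e \in ~: S then 2 else 1)); last first.
  by move=> e _; rewrite inE; case: (e \in S); rewrite /= ?card1 ?card_bool.
by rewrite -big_mkcondr /= prod_nat_const -expnD -(cardsC S) addnC.
Qed.

Section CountBelow.
Variables (T : finType) (Y : {set T}) (q : T -> nat).

Definition count_below (t : nat) : nat := #|[set y in Y | q y < t]|.

Lemma count_below_le t : count_below t <= #|Y|.
Proof. by apply/subset_leq_card/subsetP => y; rewrite inE => /andP[]. Qed.

Lemma count_below_lt y : y \in Y -> count_below (q y) < #|Y|.
Proof.
move=> yY; apply/proper_card/properP; split; last by exists y; rewrite // inE ltnn andbF.
by apply/subsetP => z; rewrite inE => /andP[].
Qed.

Lemma count_below_mono t1 t2 : t1 <= t2 -> count_below t1 <= count_below t2.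
Proof.
move=> t12; apply/subset_leq_card/subsetP => z; rewrite !inE => /andP[-> zt1].
exact: leq_trans zt1 t12.
Qed.

Lemma count_below_strict y t : y \in Y -> q y < t -> count_below (q y) < count_below t.
Proof.
move=> yY yt; apply/proper_card/properP; split; last by exists y; rewrite !inE ?yY ?yt ?ltnn.
by apply/subsetP => z; rewrite !inE => /andP[-> /ltn_trans]; apply.
Qed.

End CountBelow.

Lemma ffact_le_expn n k : n ^_ k <= n ^ k.
Proof.
rewrite ffact_prod -[in n ^ k](card_ord k) -prod_nat_const.
by apply: leq_prod => i _; apply: leq_subr.
Qed.

Lemma expn_le_ffact n k : (n - k.-1) ^ k <= n ^_ k.
Proof.
rewrite ffact_prod -[X in _ ^ X <= _](card_ord k) -prod_nat_const.
by apply: leq_prod => i _; apply: leq_sub2l; have := ltn_ord i; case: k i => // k i.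
Qed.

Lemma bin_le_expn n k : 'C(n, k) <= n ^ k.
Proof.
apply: leq_trans (ffact_le_expn n k).
by rewrite -bin_ffact leq_pmulr ?fact_gt0.
Qed.

Lemma bin_mul_expn_le m a j : 'C(a, j) * m ^ (a - j) <= m.+1 ^ a.
Proof.
have [ja|aj] := leqP j a; last by rewrite bin_small.
rewrite -addn1 expnDn (bigD1 (Ordinal (ja : j < a.+1))) //= exp1n muln1.
exact: leq_addr.
Qed.

Lemma exp_dominates_poly (c k : nat) : exists N, forall a, N <= a -> c * a ^ k * 3 ^ a <= 4 ^ a.
Proof.
(* For a >= 2(k+1): a^(k+1) <= 2^(k+1) (a-k)^(k+1) <= 2^(k+1) (k+1)! C(a, k+1),
   and C(a, k+1) 3^(a-k-1) is one term of the expansion of (3 + 1)^a. *)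
pose K := 2 ^ k.+1 * k.+1`! * 3 ^ k.+1.
have K_gt0 : 0 < K by rewrite !muln_gt0 !expn_gt0 fact_gt0.
have poly_le a : 2 * k.+1 <= a -> a ^ k.+1 * 3 ^ a <= K * 4 ^ a.
  move=> ka.
  have halve : a ^ k.+1 <= 2 ^ k.+1 * (a - k) ^ k.+1 by rewrite -expnMn leq_exp2r //; lia.
  have to_bin : (a - k) ^ k.+1 <= 'C(a, k.+1) * k.+1`! by rewrite bin_ffact expn_le_ffact.
  have split3 : 3 ^ a = 3 ^ k.+1 * 3 ^ (a - k.+1) by rewrite -expnD subnKC //; lia.
  apply: leq_trans (leq_mul (leq_trans halve (leq_mul (leqnn _) to_bin)) (eq_leq split3)) _.
  rewrite (_ : _ * _ = K * ('C(a, k.+1) * 3 ^ (a - k.+1))); last by rewrite /K; lia.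
  by rewrite leq_mul2l bin_mul_expn_le orbT.
clearbody K; exists (maxn (2 * k.+1) (c * K)) => a; rewrite geq_max => /andP[ka cKa].
rewrite -(leq_pmul2l K_gt0); apply: leq_trans (poly_le a ka).
by rewrite !mulnA [K * c]mulnC expnS !leq_mul2r cKa !orbT.
Qed.

Lemma sq_succ_le_exp3 b : 2 <= b -> b.+1 ^ 2 <= 3 ^ b.
Proof.
elim: b => // b IH; rewrite leq_eqVlt => /orP[/eqP <- //|b2].
by have := IH b2; rewrite !expnS; lia.
Qed.

(** * Hall's theorem with deficiency *)

Section DeficientHall.
Variables (A B : finType) (E : {set A * B}).
Implicit Types (S T U : {set A}) (V W : {set B}) (M : {set A * B}).

Definition nbhd V S : {set B} := [set b in V | [exists a in S, (a, b) \in E]].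

Definition is_matching M : Prop :=
  forall e1 e2, e1 \in M -> e2 \in M -> e1 != e2 -> e1.1 != e2.1 /\ e1.2 != e2.2.

Definition hall_condition U V (d : nat) : Prop :=
  forall S, S \subset U -> #|S| <= #|nbhd V S| + d.

Definition matching_with_deficiency U V (d : nat) : Prop :=
  exists2 M : {set A * B},
    [/\ M \subset E, M \subset setX U V & is_matching M] & #|U| <= #|M| + d.

Lemma nbhd_sub V S : nbhd V S \subset V.
Proof. by apply/subsetP => b; rewrite inE => /andP[]. Qed.

Lemma deficiency_card U V d : #|U| <= d -> matching_with_deficiency U V d.
Proof.
by move=> Ud; exists set0; rewrite ?sub0set ?cards0 //; split=> // e1 e2; rewrite inE.
Qed.

Lemma deficiency_edge a b : (a, b) \in E -> matching_with_deficiency [set a] [set b] 0.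
Proof.
move=> abE; exists [set (a, b)]; rewrite ?cards1 //.
split; rewrite ?sub1set ?inE ?eqxx //.
by move=> e1 e2; rewrite !inE => /eqP-> /eqP->; rewrite eqxx.
Qed.

Lemma deficiency_setU U1 U2 V1 V2 d1 d2 :
  [disjoint U1 & U2] -> [disjoint V1 & V2] ->
  matching_with_deficiency U1 V1 d1 -> matching_with_deficiency U2 V2 d2 ->
  matching_with_deficiency (U1 :|: U2) (V1 :|: V2) (d1 + d2).
Proof.
move=> dU dV [M1 [M1E M1X M1m] M1c] [M2 [M2E M2X M2m] M2c].
have apart e1 e2 : e1 \in M1 -> e2 \in M2 -> e1.1 != e2.1 /\ e1.2 != e2.2.
  move=> /(subsetP M1X) + /(subsetP M2X); rewrite !inE => /andP[e1U e1V] /andP[e2U e2V].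
  split; apply/eqP => e12.
    by move: (disjointFr dU e1U); rewrite e12 e2U.
  by move: (disjointFr dV e1V); rewrite e12 e2V.
have dM : [disjoint M1 & M2].
  rewrite disjoint_subset; apply/subsetP => e /apart e2.
  by rewrite inE; apply/negP => /e2; rewrite eqxx => -[].
exists (M1 :|: M2); last first.
  by rewrite (cardsU M1) (disjoint_setI0 dM) cards0 subn0 cardsU (disjoint_setI0 dU); lia.
split.
- by rewrite subUset M1E M2E.
- rewrite subUset (subset_trans M1X) ?(subset_trans M2X) //.
    by rewrite setXS ?subsetUr.
  by rewrite setXS ?subsetUl.
move=> e1 e2; rewrite !inE => /orP[h1|h1] /orP[h2|h2].
- exact: M1m.
- by move=> _; apply: apart.
- by move=> _; have [] := apart _ _ h2 h1; rewrite ![_ == e1.1]eq_sym ![_ == e1.2]eq_sym.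
- exact: M2m.
Qed.

Lemma nbhdU V S T : nbhd V (S :|: T) = nbhd V S :|: nbhd V T.
Proof.
apply/setP => b; rewrite !inE -andb_orr; congr (_ && _).
apply/existsP/orP => [[a]|[]/existsP[a]]; rewrite ?inE.
- by case/andP=> /orP[aS|aT] ab; [left | right]; apply/existsP; exists a; rewrite ?aS ?aT.
- by case/andP=> aS ab; exists a; rewrite !inE aS.
- by case/andP=> aT ab; exists a; rewrite !inE aT orbT.
Qed.

Lemma nbhd_setD V W S : nbhd (V :\: W) S = nbhd V S :\: W.
Proof. by apply/setP => b; rewrite !inE andbA. Qed.

Lemma nbhd_nbhd V S T : S \subset T -> nbhd (nbhd V T) S = nbhd V S.
Proof.
move=> ST; apply/setP => b; rewrite !inE.
apply/andP/andP => [[/andP[bV _] //]|[bV abS]]; split=> //; rewrite bV.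
by case/existsP: abS => a /andP[aS ab]; apply/existsP; exists a; rewrite (subsetP ST).
Qed.

Lemma hall_condition_isolated a U V d : a \in U -> nbhd V [set a] = set0 ->
  hall_condition U V d -> 0 < d /\ hall_condition (U :\ a) V d.-1.
Proof.
move=> aU Na0 hall.
have d_gt0 : 0 < d by have := hall [set a]; rewrite sub1set cards1 Na0 cards0 => /(_ aU).
split=> // S SUa.
have aS : a \notin S by apply/negP => /(subsetP SUa); rewrite !inE eqxx.
have := hall (a |: S); rewrite subUset sub1set aU (subset_trans SUa (subsetDl _ _)).
by rewrite cardsU1 aS nbhdU Na0 set0U => /(_ isT); lia.
Qed.

Lemma hall_condition_tight T U V d : T \subset U -> #|nbhd V T| + d <= #|T| ->
  hall_condition U V d ->
  hall_condition T (nbhd V T) d /\ hall_condition (U :\: T) (V :\: nbhd V T) 0.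
Proof.
move=> TU tight hall; split=> S SU.
  by rewrite nbhd_nbhd //; apply: hall (subset_trans SU TU).
have dTS : T :&: S = set0.
  by apply/setP => a; rewrite !inE; apply/negbTE/andP => -[aT /(subsetP SU)]; rewrite inE aT.
have := hall (T :|: S); rewrite subUset TU (subset_trans SU (subsetDl _ _)) => /(_ isT).
rewrite cardsU dTS cards0 nbhdU cardsU nbhd_setD addn0.
have := cardsID (nbhd V T) (nbhd V S); rewrite setIC.
have := subset_leq_card (subsetIl (nbhd V S) (nbhd V T)); lia.
Qed.

Lemma hall_condition_edge a b U V d : a \in U -> b \in V ->
  (forall S, S \subset U :\ a -> S != set0 -> #|S| < #|nbhd V S| + d) ->
  hall_condition (U :\ a) (V :\ b) d.
Proof.
move=> aU bV loose S SUa; have [->|S0] := eqVneq S set0; first by rewrite cards0.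
have := loose S SUa S0; rewrite nbhd_setD (cardsD1 b (nbhd V S)); lia.
Qed.

Theorem deficient_hall U V d : hall_condition U V d -> matching_with_deficiency U V d.
Proof.
(* Induction on |U|: a vertex a without neighbours uses up one unit of
   deficiency; a tight nonempty proper subset splits the problem in two;
   otherwise any edge at a can be added to a matching of U minus a. *)
elim: {U}_.+1 {-2}U (ltnSn #|U|) V d => // k IH U ltUk V d hall.
have [->|[a aU]] := set_0Vmem U; first by apply: deficiency_card; rewrite cards0.
have ltUa : #|U :\ a| < k by have := proper_card (properD1 aU); lia.
have [Na0|/set0Pn[b]] := eqVneq (nbhd V [set a]) set0.
  have [d_gt0 hall'] := hall_condition_isolated aU Na0 hall.
  rewrite -(setD1K aU) -(set0U V) -(prednK d_gt0) -add1n.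
  apply: deficiency_setU; rewrite ?disjoints1 ?setD11 -?setI_eq0 ?set0I //.
    by apply: deficiency_card; rewrite cards1.
  exact: IH.
rewrite inE => /andP[bV /existsP[a' /andP[/set1P-> abE]]].
have [/existsP[T /and3P[TU T0 tight]]|loose] := boolP [exists T : {set A},
    [&& T \proper U, T != set0 & #|nbhd V T| + d <= #|T|]].
  have [hallT hallUT] := hall_condition_tight (proper_sub TU) tight hall.
  rewrite -(setUD_sub (proper_sub TU)) -(setUD_sub (nbhd_sub V T)) -(addn0 d).
  apply: deficiency_setU; rewrite ?disjoint_setD //; apply: IH => //.
    by have := proper_card TU; lia.
  rewrite cardsDS ?proper_sub //; have := card_gt0 T; rewrite T0; lia.
rewrite -(setD1K aU) -(setD1K bV) -(add0n d).
apply: deficiency_setU; rewrite ?disjoints1 ?setD11 //; first exact: deficiency_edge.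
apply: IH => //; apply: hall_condition_edge => // S SUa S0.
rewrite ltnNge; apply/negP => tightS.
move/negP: loose; apply; apply/existsP; exists S.
by rewrite S0 tightS (sub_proper_trans SUa (properD1 aU)).
Qed.
End DeficientHall.

(** * Feedback arc sets and linear orders *)

Section FeedbackArcSet.
Variables (n : nat) (o : orient n) (F : {set 'I_n * 'I_n}).
Hypothesis fasF : feedback_arc_set o F.

Definition free_arc : rel (vert n) := fun x y =>
  arc o x y && (if und x y is Some e then e \notin F else false).

Lemma free_arc_acyclic u v : free_arc u v -> ~~ connect free_arc v u.
Proof.
move=> uv; apply/negP => /connectP[p pth uE]; subst u.
case/shortenP: pth uv => p' pth' uniq_p' _ uv.
have cyc : cycle free_arc (v :: p') by rewrite /= rcons_path pth' uv.
have /fasF/hasP[x xp] : directed_cycle o (v :: p').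
  by rewrite /directed_cycle uniq_p' (sub_cycle _ cyc) // => ? ? /andP[].
have /andP[_] := next_cycle cyc xp.
by case: (und x (next (v :: p') x)) => // e /negbTE ->.
Qed.

Definition height (v : vert n) : nat := #|[set w | connect free_arc w v]|.

Lemma height_lt u v : free_arc u v -> height u < height v.
Proof.
move=> uv; apply: proper_card; apply/properP; split.
  by apply/subsetP => w; rewrite !inE => wu; apply: connect_trans wu (connect1 uv).
by exists v; rewrite !inE ?connect0 // (negbTE (free_arc_acyclic uv)).
Qed.

Lemma height_orient x y : (x, y) \notin F ->
  if o (x, y) then height (inl x) < height (inr y) else height (inr y) < height (inl x).
Proof. by move=> xyF; case: ifP => oxy; apply: height_lt; rewrite /free_arc /= oxy xyF. Qed.

End FeedbackArcSet.

Definition order_induced n (o : orient n) (X Y : {set 'I_n}) : Prop :=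
  exists h : vert n -> nat, forall x y, x \in X -> y \in Y ->
    if o (x, y) then h (inl x) < h (inr y) else h (inr y) < h (inl x).

Lemma fas_order_induced n (o : orient n) F (X Y : {set 'I_n}) : feedback_arc_set o F ->
  (forall x y, x \in X -> y \in Y -> (x, y) \notin F) -> order_induced o X Y.
Proof. by move=> fasF XYF; exists (height o F) => x y xX yY; apply: height_orient; auto. Qed.

Lemma good_of_no_large_induced n (o : orient n) :
  (forall X Y : {set 'I_n}, n.+2 <= #|X| + #|Y| -> ~ order_induced o X Y) -> good o.
Proof.
move=> noind F [fasF _].
have [/forallP hall|/forallPn[S]] :=
  boolP [forall S : {set 'I_n}, #|S| <= #|nbhd F setT S| + 1].
  have [|M [MF _ Mm] cardM] := @deficient_hall _ _ F setT setT 1; first by move=> S _.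
  have [M' M'M cardM'] : exists2 M' : {set 'I_n * 'I_n}, M' \subset M & #|M'| = n.-1.
    by apply: subset_of_card; move: cardM; rewrite cardsT card_ord -subn1 leq_subLR addnC.
  exists M'; split=> //; first exact: subset_trans M'M MF.
  by move=> e1 e2 /(subsetP M'M) + /(subsetP M'M); apply: Mm.
rewrite -ltnNge => deficient; have [] := noind S (~: nbhd F setT S).
  have := cardsC (nbhd F setT S); rewrite card_ord => Cn.
  by rewrite -[n in n.+1 < _]Cn -!addSn leq_add2r -addn1.
apply: (fas_order_induced fasF) => x y xS; rewrite !inE => /existsPn/(_ x).
by rewrite xS.
Qed.

(** * Counting order-induced orientations *)

Lemma card_ordset_le n (Z : {set 'I_n}) : #|Z| <= n.
Proof. by have := max_card (mem Z); rewrite card_ord. Qed.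

(* Coordinates outside Z are pinned to [ord0], so that a profile is in effect a
   function on Z. *)
Definition rank_profiles n (Z : {set 'I_n}) (k : nat) : pred {ffun 'I_n -> 'I_n.+1} :=
  family (fun i => if i \in Z then [pred v : 'I_n.+1 | v < k] else pred1 ord0).

Lemma card_rank_profiles n (Z : {set 'I_n}) k : k <= n.+1 -> #|rank_profiles Z k| = k ^ #|Z|.
Proof.
move=> kn; have cardk : #|[pred v : 'I_n.+1 | v < k]| = k.
  have vkE : [pred v : 'I_n.+1 | v < k] =i [set widen_ord kn i | i in 'I_k].
    move=> v; rewrite !inE; apply/idP/imsetP => [vk|[i _ ->]]; last by rewrite /= ltn_ord.
    by exists (Ordinal vk) => //; apply: val_inj.
  by rewrite (eq_card vkE) card_imset ?card_ord // => i j [] /val_inj.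
rewrite card_family foldrE big_map big_enum (eq_bigr (fun i => if i \in Z then k else 1)).
  by rewrite -big_mkcondr /= prod_nat_const.
by move=> i _; case: (i \in Z); rewrite ?card1.
Qed.

Lemma order_induced_profile n (o : orient n) (X Y : {set 'I_n}) : order_induced o X Y ->
  exists2 r, r \in rank_profiles Y #|Y| & exists2 s, s \in rank_profiles X #|Y|.+1 &
    forall x y, x \in X -> y \in Y -> o (x, y) = (s x <= r y).
Proof.
(* [r y] and [s x] count the elements of Y lying below y, resp. below x. *)
case=> h hP; pose rank t : 'I_n.+1 := inord (count_below Y (h \o inr) t).
have rankE t : rank t = count_below Y (h \o inr) t :> nat.
  by rewrite inordK // ltnS (leq_trans (count_below_le _ _ _)) ?card_ordset_le.
exists [ffun y => if y \in Y then rank (h (inr y)) else ord0].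
  apply/familyP => y; rewrite ffunE; case: ifP => yY //.
  by rewrite inE rankE (count_below_lt _ yY).
exists [ffun x => if x \in X then rank (h (inl x)) else ord0].
  apply/familyP => x; rewrite ffunE; case: ifP => xX //.
  by rewrite inE rankE ltnS count_below_le.
move=> x y xX yY; rewrite !ffunE xX yY !rankE; have := hP x y xX yY.
case: (o (x, y)) => [/ltnW/count_below_mono -> //|yx].
by rewrite leqNgt (count_below_strict yY yx).
Qed.

Definition induced_set n (X Y : {set 'I_n}) : {set orient n} :=
  [set o | `[< order_induced o X Y >]].

Lemma card_induced_set_le n (X Y : {set 'I_n}) :
  #|induced_set X Y| * 2 ^ (#|X| * #|Y|) <= #|Y| ^ #|Y| * #|Y|.+1 ^ #|X| * 2 ^ (n * n).
Proof.
pose agree (rs : {ffun 'I_n -> 'I_n.+1} * {ffun 'I_n -> 'I_n.+1}) :=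
  [set o : orient n | [forall e in setX X Y, o e == (rs.2 e.1 <= rs.1 e.2)]].
pose P := [predX rank_profiles Y #|Y| & rank_profiles X #|Y|.+1].
have sub : induced_set X Y \subset \bigcup_(rs | P rs) agree rs.
  apply/subsetP => o; rewrite inE => /asboolP/order_induced_profile[r rP [s sP os]].
  apply/bigcupP; exists (r, s); first by rewrite inE /= rP.
  by rewrite inE; apply/forallP => -[x y]; apply/implyP; rewrite inE => /andP[xX yY]; rewrite os.
apply: leq_trans (leq_mul (subset_leq_card sub) (leqnn _)) _.
apply: leq_trans (leq_card_bigcup_const (m := 2 ^ (n * n)) _) _.
  by move=> rs _; rewrite -cardsX card_ffun_agree card_prod card_ord.
have Yn := card_ordset_le Y.
by rewrite cardX !card_rank_profiles ?ltnS ?(leqW Yn).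
Qed.

(* The same tournament, with the roles of A1 and A2 exchanged. *)
Definition transpose_orient n (o : orient n) : orient n := [ffun e => ~~ o (e.2, e.1)].

Lemma transpose_orientK n : involutive (@transpose_orient n).
Proof. by move=> o; apply/ffunP => -[x y]; rewrite !ffunE negbK. Qed.

Lemma order_induced_transpose n (o : orient n) X Y :
  order_induced o X Y -> order_induced (transpose_orient o) Y X.
Proof.
case=> h hP; exists (fun v => h (match v with inl i => inr i | inr i => inl i end)).
by move=> y x yY xX; rewrite ffunE /=; have := hP x y xX yY; case: (o (x, y)).
Qed.

Lemma card_induced_set_transpose n (X Y : {set 'I_n}) :
  #|induced_set X Y| <= #|induced_set Y X|.
Proof.
rewrite -(card_imset _ (can_inj (@transpose_orientK n))).
apply/subset_leq_card/subsetP => _ /imsetP[u ind ->]; move: ind; rewrite !inE.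
by move=> /asboolP ind; apply/asboolP/order_induced_transpose.
Qed.

(* The number of rank profiles counted against the second, resp. the first, side. *)
Definition weight (a b : nat) : nat := minn (b ^ b * b.+1 ^ a) (a ^ a * a.+1 ^ b).

Lemma card_induced_set_weight n (X Y : {set 'I_n}) :
  #|induced_set X Y| * 2 ^ (#|X| * #|Y|) <= weight #|X| #|Y| * 2 ^ (n * n).
Proof.
rewrite /weight minnMl leq_min card_induced_set_le /=.
apply: leq_trans (leq_mul (card_induced_set_transpose X Y) (leqnn _)) _.
by rewrite [#|X| * _]mulnC card_induced_set_le.
Qed.

Definition induced_of_size n (a b : nat) : {set orient n} :=
  \bigcup_(XY : {set 'I_n} * {set 'I_n} | (#|XY.1| == a) && (#|XY.2| == b))
    induced_set XY.1 XY.2.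

Lemma card_induced_of_size n a b :
  #|induced_of_size n a b| * 2 ^ (a * b) <= 'C(n, a) * 'C(n, b) * (weight a b * 2 ^ (n * n)).
Proof.
apply: leq_trans (leq_card_bigcup_const (m := weight a b * 2 ^ (n * n)) _) _.
  by move=> [X Y] /andP[/eqP <- /eqP <-]; apply: card_induced_set_weight.
rewrite leq_mul2r (@eq_card _ _ [predX [set X : {set 'I_n} | #|X| == a] &
                                       [set Y : {set 'I_n} | #|Y| == b]]).
  by rewrite cardX !card_draws card_ord leqnn orbT.
by move=> [X Y]; rewrite !inE.
Qed.

Definition bad_set n : {set orient n} :=
  \bigcup_(ab : 'I_n.+1 * 'I_n.+1 | n.+2 <= ab.1 + ab.2) induced_of_size n ab.1 ab.2.

Lemma good_of_notin_bad n (o : orient n) : o \notin bad_set n -> good o.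
Proof.
move=> notbad; apply: good_of_no_large_induced => X Y large ind.
have ordK (Z : {set 'I_n}) : (inord #|Z| : 'I_n.+1) = #|Z| :> nat.
  by rewrite inordK // ltnS card_ordset_le.
case/negP: notbad; apply/bigcupP; exists (inord #|X|, inord #|Y|); rewrite /= !ordK //.
by apply/bigcupP; exists (X, Y); rewrite /= ?eqxx // inE; apply/asboolP.
Qed.

Lemma card_bad_set n :
  (forall a b, a <= n -> b <= n -> n.+2 <= a + b ->
     n ^ 3 * 'C(n, a) * 'C(n, b) * weight a b <= 2 ^ (a * b)) ->
  n ^ 3 * #|bad_set n| <= n.+1 ^ 2 * 2 ^ (n * n).
Proof.
move=> small; rewrite mulnC.
apply: leq_trans (leq_card_bigcup_const (m := 2 ^ (n * n)) _) _; last first.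
  by rewrite leq_mul2r (leq_trans (max_card _)) ?orbT // card_prod card_ord mulnn.
move=> [a b] /= large; rewrite -(@leq_pmul2r (2 ^ (a * b))) ?expn_gt0 //.
apply: leq_trans (_ : n ^ 3 * ('C(n, a) * 'C(n, b) * (weight a b * 2 ^ (n * n))) <= _).
  by rewrite mulnAC mulnC leq_mul2l card_induced_of_size orbT.
rewrite !mulnA [2 ^ (n * n) * _]mulnC leq_mul2r.
by rewrite (small _ _ (ltn_ord a) (ltn_ord b) large) orbT.
Qed.

Section LargeN.
Variable N : nat.
Hypothesis dom : forall a, N <= a -> 256 * a ^ 8 * 3 ^ a <= 4 ^ a.

Lemma weight_small n a b : 2 * N <= n -> a <= n -> b <= n -> n.+2 <= a + b ->
  n ^ 3 * 'C(n, a) * 'C(n, b) * weight a b <= 2 ^ (a * b).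
Proof.
(* For b <= a: C(n, a) = C(n, n - a) <= n^(b-2), so the left-hand side is at
   most n^(4b) (b+1)^a.  After squaring, (b+1)^2 <= 3^b and n <= 2a reduce the
   claim to 256 a^8 3^a <= 4^a. *)
move=> Nn; wlog ba : a b / b <= a => [sym an bn large|an bn large].
  have [ba|/ltnW ab] := leqP b a; first exact: sym.
  rewrite /weight minnC -/(weight b a) [n ^ 3 * _ * _]mulnAC [a * b]mulnC.
  by apply: sym; rewrite // addnC.
have b2 : 2 <= b by lia.
have n_gt0 : 0 < n by lia.
have binCa : 'C(n, a) <= n ^ (b - 2).
  rewrite -(bin_sub an); apply: leq_trans (bin_le_expn _ _) (leq_pexp2l n_gt0 _); lia.
have bb_le : b ^ b <= n ^ b by rewrite leq_exp2r //; lia.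
apply: leq_trans (_ : n ^ (4 * b) * b.+1 ^ a <= _).
  apply: leq_trans (_ : n ^ 3 * n ^ (b - 2) * n ^ b * (n ^ b * b.+1 ^ a) <= _).
    apply: leq_mul; first by rewrite !leq_mul ?bin_le_expn.
    by rewrite (leq_trans (geq_minl _ _)) // leq_mul2r bb_le orbT.
  by rewrite mulnA -!expnD leq_mul2r leq_pexp2l ?orbT //; lia.
rewrite -(leq_exp2r _ _ (isT : 0 < 2)) expnMn -!expnM.
have -> : 2 ^ (a * b * 2) = (4 ^ a) ^ b by rewrite -expnM -[4]/(2 ^ 2) -expnM mulnC.
have -> : n ^ (4 * b * 2) = (n ^ 8) ^ b by rewrite -expnM; congr (_ ^ _); lia.
have -> : b.+1 ^ (a * 2) = (b.+1 ^ 2) ^ a by rewrite -expnM mulnC.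
apply: leq_trans (_ : (n ^ 8) ^ b * (3 ^ a) ^ b <= _).
  rewrite leq_mul2l -[(3 ^ a) ^ b]expnM mulnC expnM leq_exp2r ?sq_succ_le_exp3 ?orbT //.
  lia.
rewrite -expnMn leq_exp2r; last by lia.
apply: (leq_trans _ (@dom a _)); last by lia.
by rewrite leq_mul2r (_ : 256 = 2 ^ 8) // -expnMn leq_exp2r //; lia.
Qed.

Lemma card_bad_set_le n : 0 < n -> 2 * N <= n -> #|bad_set n| * n.+1 <= 8 * 2 ^ (n * n).
Proof.
move=> n_gt0 Nn; have bad_le := card_bad_set (fun a b => @weight_small n a b Nn).
rewrite -(@leq_pmul2l (n.+1 ^ 2)) ?expn_gt0 //.
apply: leq_trans (_ : 8 * (n ^ 3 * #|bad_set n|) <= _); last first.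
  by rewrite [X in _ <= X]mulnCA leq_mul2l bad_le.
rewrite mulnCA -expnSr mulnC mulnA leq_mul2r (_ : 8 = 2 ^ 3) // -expnMn leq_exp2r //.
by rewrite orbC; apply/orP; left; lia.
Qed.

End LargeN.

Lemma card_orient n : #|{: orient n}| = 2 ^ (n * n).
Proof. by rewrite card_ffun card_bool card_prod card_ord. Qed.

(** * Asymptotics *)

Import Order.TTheory GRing.Theory Num.Theory numFieldNormedType.Exports.
Local Open Scope ring_scope.

Lemma prob_R_le1 (R : realType) n (P : orient n -> Prop) : prob_R R P <= 1.
Proof.
by rewrite /prob_R ler_pdivrMr ?ltr0n ?expn_gt0 // mul1r ler_nat -card_orient max_card.
Qed.

Lemma prob_good_ge (R : realType) N n :
  (forall a, (N <= a)%N -> (256 * a ^ 8 * 3 ^ a <= 4 ^ a)%N) -> (0 < n)%N -> (2 * N <= n)%N ->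
  1 - 8 * n.+1%:R^-1 <= prob_R R (@good n).
Proof.
move=> dom n_gt0 Nn; have bad_le := card_bad_set_le dom n_gt0 Nn.
have good_ge : (2 ^ (n * n) <= #|[set o : orient n | `[< good o >]]| + #|bad_set n|)%N.
  rewrite -(card_orient n) -(cardsC (bad_set n)) addnC leq_add2r.
  by apply/subset_leq_card/subsetP => o; rewrite !inE => /good_of_notin_bad/asboolP.
rewrite /prob_R; set G := #|_| in good_ge *; set B := #|bad_set n| in bad_le good_ge.
set T := (2 ^ (n * n))%N in bad_le good_ge *.
have T_gt0 : 0 < T%:R :> R by rewrite ltr0n expn_gt0.
rewrite ler_pdivlMr // mulrBl mul1r lerBlDr; apply: le_trans (_ : G%:R + B%:R <= _).
  by rewrite -natrD ler_nat.
by rewrite lerD2l mulrAC ler_pdivlMr ?ltr0n // -!natrM ler_nat.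
Qed.

Local Open Scope classical_set_scope.

Theorem proposition3p1 (R : realType) :
  prob_R R (@good n) @[n --> \oo] --> (1 : R).
Proof.
have [N dom] := exp_dominates_poly 256 8.
apply: (@squeeze_cvgr _ _ _ _ (fun n => 1 - 8 * harmonic n) (fun=> 1)).
- near=> n; rewrite prob_R_le1 andbT; apply: prob_good_ge dom _ _.
    by near: n; exists 1%N.
  by near: n; exists (2 * N)%N.
- rewrite -[X in _ --> X]subr0 -(mulr0 8); apply: cvgB; first exact: cvg_cst.
  by apply: cvgM; [exact: cvg_cst | exact: cvg_harmonic].
- exact: cvg_cst.
Unshelve. all: by end_near.
Qed.
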